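(* Let $\gamma$ be a cocycle and set $V_{\mathbb{R}}^\gamma:=\{z\in V_{\mathbb{R}}:\lambda(z)\ge\mathrm{val}_L(\gamma^{dom}(\lambda))\text{ for all }\lambda\in\Lambda\}$ and, for $w\in W$, $z_w:=-val(\gamma(w^{-1},\cdot))\in V_{\mathbb{R}}$. Then $V_{\mathbb{R}}^\gamma$ is the convex hull in $V_{\mathbb{R}}$ of the finitely many points $-z_w$, $w\in W$.
   Context: $L$ is a finite extension of $\mathbb{Q}_p$, $K$ a complete extension field of $\mathbb{Q}_p$ containing $L$; $|\ |_L$ normalized absolute value of $L$, $\mathrm{val}_L:K^\times\to\mathbb{R}$ with $\mathrm{val}_L(L^\times)=\mathbb{Z}$. $G$ is the $L$-points of an $L$-split connected reductive group, $T$ a maximal $L$-split torus, $P$ a Borel subgroup containing $T$, $W=N(T)/T$, $U_0$ a maximal compact subgroup special with respect to $T$, $\Lambda=T/(U_0\cap T)$, $\lambda:T\to\Lambda$ the projection, $W$ acting on $\Lambda$ by conjugation. $T^{--}=\{t:|\alpha(t)|_L\ge1$ for all roots $\alpha$ positive for $P\}$, $\Lambda^{--}=\lambda(T^{--})$. $V_{\mathbb{R}}=\mathrm{Hom}(\Lambda,\mathbb{R})$; each $\lambda\in\Lambda$ is viewed as a linear form on $V_{\mathbb{R}}$; $val:\mathrm{Hom}(\Lambda,K^\times)\to V_{\mathbb{R}}$, $\zeta\mapsto\mathrm{val}_L\circ\zeta$. A cocycle is $\gamma:W\times\Lambda\to K^\times$ with (a) $\gamma(w,\lambda\mu)=\gamma(w,\lambda)\gamma(w,\mu)$;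 (b) $\gamma(vw,\lambda)=\gamma(v,{}^w\lambda)\gamma(w,\lambda)$; (c) $|\gamma(w,\lambda)|\le1$ for $\lambda\in\Lambda^{--}$; (d) $\gamma(w,\lambda)=1$ if ${}^w\lambda=\lambda$. $\gamma^{dom}(\lambda):=\gamma(w,\lambda)$ for any $w$ with ${}^w\lambda\in\Lambda^{--}$. *)

From HB Require Import structures.
From mathcomp Require Import all_boot all_order all_algebra.
From Stdlib Require Import ClassicalEpsilon.
Set Implicit Arguments. Unset Strict Implicit. Unset Printing Implicit Defensive.
Import Order.TTheory GRing.Theory Num.Theory.
Local Open Scope ring_scope.

(* Cocharacter lattice Lambda = X_*(T) = Z^n as column vectors,
   characters X^*(T) = Z^n as row vectors, natural pairing <a, l>. *)
Definition pairing n (a : 'rV[int]_n) (l : 'cV[int]_n) : int := (a *m l) ord0 ord0.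

(* A (reduced) root datum: a list of pairs (root alpha, coroot alpha^v). *)
Definition root_datum n (rd : seq ('rV[int]_n * 'cV[int]_n)) : Prop :=
  [/\ uniq (map fst rd) /\ uniq (map snd rd),
      (forall p, p \in rd -> pairing p.1 p.2 = 2),
      (forall p q, p \in rd -> q \in rd ->
         q.1 - (pairing q.1 p.2) *: p.1 \in map fst rd),
      (forall p q, p \in rd -> q \in rd ->
         q.2 - (pairing p.1 q.2) *: p.2 \in map snd rd)
    & (forall p, p \in rd -> 2%:R *: p.1 \notin map fst rd)].

(* Positive system (Borel P containing T): given by a regular cocharacter xi. *)
Definition regular n (rd : seq ('rV[int]_n * 'cV[int]_n)) (xi : 'cV[int]_n) : Prop :=
  forall p, p \in rd -> pairing p.1 xi != 0.

Definition positive n (xi : 'cV[int]_n) (a : 'rV[int]_n) : bool := 0 < pairing a xi.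

Definition antidom n (rd : seq ('rV[int]_n * 'cV[int]_n)) (xi : 'cV[int]_n)
  (l : 'cV[int]_n) : Prop :=
  forall p, p \in rd -> positive xi p.1 -> pairing p.1 l <= 0.

Definition refl n (p : 'rV[int]_n * 'cV[int]_n) : 'M[int]_n := 1%:M - p.2 *m p.1.

(* Weyl group W, as a subgroup of GL(Lambda) generated by the reflections;
   w acts by ^w l = w *m l. *)
Inductive inW n (rd : seq ('rV[int]_n * 'cV[int]_n)) : 'M[int]_n -> Prop :=
  | inW1 : inW rd 1%:M
  | inWs p w : p \in rd -> inW rd w -> inW rd (refl p *m w).

(* Cocycle gamma : W x Lambda -> K^x ; |x| <= 1 is expressed as val x >= 0. *)
Definition cocycle n (rd : seq ('rV[int]_n * 'cV[int]_n)) (xi : 'cV[int]_n)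
  (R : realFieldType) (K : fieldType) (val : K -> R)
  (gamma : 'M[int]_n -> 'cV[int]_n -> K) : Prop :=
  [/\ (forall w l, inW rd w -> gamma w l != 0),
      (forall w l m, inW rd w -> gamma w (l + m) = gamma w l * gamma w m),
      (forall v w l, inW rd v -> inW rd w ->
         gamma (v *m w) l = gamma v (w *m l) * gamma w l),
      (forall w l, inW rd w -> antidom rd xi l -> 0 <= val (gamma w l))
    & (forall w l, inW rd w -> w *m l = l -> gamma w l = 1)].

Definition gdom n (rd : seq ('rV[int]_n * 'cV[int]_n)) (xi : 'cV[int]_n)
  (K : fieldType) (gamma : 'M[int]_n -> 'cV[int]_n -> K) (l : 'cV[int]_n) : K :=
  gamma (epsilon (inhabits (1%:M : 'M[int]_n))
           (fun w => inW rd w /\ antidom rd xi (w *m l))) l.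

(* V_R = Hom(Lambda, R): additive maps Lambda -> R; lambda(z) := z lambda. *)
Definition in_VR n (R : realFieldType) (z : 'cV[int]_n -> R) : Prop :=
  forall l m, z (l + m) = z l + z m.

Definition Vgamma n (rd : seq ('rV[int]_n * 'cV[int]_n)) (xi : 'cV[int]_n)
  (R : realFieldType) (K : fieldType) (val : K -> R)
  (gamma : 'M[int]_n -> 'cV[int]_n -> K) (z : 'cV[int]_n -> R) : Prop :=
  in_VR z /\ forall l, val (gdom rd xi gamma l) <= z l.

Definition zw n (R : realFieldType) (K : fieldType) (val : K -> R)
  (gamma : 'M[int]_n -> 'cV[int]_n -> K) (w : 'M[int]_n) : 'cV[int]_n -> R :=
  fun l => - val (gamma (invmx w) l).

Definition in_hull (T : Type) (R : realFieldType) (S : (T -> R) -> Prop)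
  (z : T -> R) : Prop :=
  exists (m : nat) (c : 'I_m -> R) (pt : 'I_m -> T -> R),
    [/\ forall i, 0 <= c i, \sum_i c i = 1, forall i, S (pt i)
      & forall t, z t = \sum_i c i * pt i t].

(* Each point -z_w lies in V^gamma: by the cocycle relation and positivity (c),
   among all v in W the valuation of gamma(v, l) is smallest when ^v l is
   antidominant, where it equals val gamma^dom(l); and V^gamma is convex.
   Conversely let z be in V^gamma. The Weyl group is finite, because it acts
   faithfully on the finite set of roots (a vector of the coroot span orthogonal
   to all roots vanishes, as one sees with a W-invariant form). If z were not in
   the hull of the finitely many -z_w, Farkas' lemma would give a functional x
   separating them; pick u in W with ^u x antidominant (u minimises a W-invariant
   form evaluated against xi). On the chamber u^-1 C, where C is the
   antidominant cone, z dominates -z_(u^-1) at the integral points by the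
   definition of V^gamma, hence at all real points, because a rational
   polyhedral cone is generated by integral vectors (Fourier-Motzkin
   elimination). Evaluating at x contradicts the separation. *)

From mathcomp Require Import all_boot all_order all_algebra.
Import Order.TTheory GRing.Theory Num.Theory.
Local Open Scope ring_scope.
From mathcomp Require Import ring lra.
From Stdlib Require Import ClassicalEpsilon.
Set Implicit Arguments. Unset Strict Implicit. Unset Printing Implicit Defensive.

Lemma perm_map_stable (T : eqType) (f : T -> T) (s : seq T) :
  uniq s -> injective f -> {subset map f s <= s} -> perm_eq (map f s) s.
Proof.
move=> s_uniq f_inj fs_s; have fs_uniq : uniq (map f s) by rewrite map_inj_uniq.
apply: uniq_perm => //; apply: (uniq_min_size fs_uniq fs_s _).2.
by rewrite size_map.
Qed.

Fixpoint seqs_over (T : Type) (L : seq T) k : seq (seq T) :=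
  if k is k'.+1 then [seq x :: t | x <- L, t <- seqs_over L k'] else [:: [::]].

Lemma mem_seqs_over (T : eqType) (L : seq T) t :
  all (mem L) t -> t \in seqs_over L (size t).
Proof.
elim: t => [|x t IH] //= /andP[xL tL].
by apply: (allpairs_f (fun x t => x :: t)) => //; apply: IH.
Qed.

Lemma enum_of_injection (T U : eqType) (x0 : T) (P : T -> Prop) (f : T -> U) (S : seq U) :
  P x0 -> (forall x, P x -> f x \in S) ->
  (forall x y, P x -> P y -> f x = f y -> x = y) ->
  exists s : seq T, forall x, P x <-> x \in s.
Proof.
move=> Px0 fS f_inj.
pose Q u x := P x /\ ((exists2 y, P y & f y = u) -> f x = u).
pose g u := epsilon (inhabits x0) (Q u).
have gP u : Q u (g u).
  apply: epsilon_spec; have [[y Py fy]|nex] := classic (exists2 y, P y & f y = u).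
    by exists y; split=> // _.
  by exists x0; split=> // /nex.
exists (map g S) => x; split=> [Px|/mapP[u _ ->]]; last by case: (gP u).
apply/mapP; exists (f x); first exact: fS.
have [Pgx /(_ (ex_intro2 _ _ x Px erefl)) fgx] := gP (f x).
exact: f_inj Px Pgx (esym fgx).
Qed.

Lemma seq_argmin d (R : orderType d) (T : eqType) (f : T -> R) a s :
  exists2 x, x \in a :: s & forall y, y \in a :: s -> (f x <= f y)%O.
Proof.
elim: s => [|b s [x xs xmin]]; first by exists a => [|y]; rewrite ?mem_head // inE => /eqP->.
have [fbx|fxb] := leP (f b) (f x).
  exists b => [|y]; first by rewrite !inE eqxx orbT.
  rewrite !inE => /or3P[/eqP->|/eqP->//|ys]; apply: le_trans fbx (xmin _ _).
    by rewrite inE eqxx.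
  by rewrite inE ys orbT.
exists x => [|y]; first by move: xs; rewrite !inE => /orP[]->; rewrite ?orbT.
rewrite !inE => /or3P[/eqP->|/eqP->|ys]; last by apply: xmin; rewrite inE ys orbT.
  by apply: xmin; rewrite inE eqxx.
exact: ltW.
Qed.

Section Entries.
Variables (R : comPzRingType) (m k : nat).
Implicit Types A B : 'M[R]_(m, k).

Lemma entryD A B i j : (A + B) i j = A i j + B i j.
Proof. by rewrite mxE. Qed.

Lemma entryZ c A i j : (c *: A) i j = c * A i j.
Proof. by rewrite mxE. Qed.

Lemma entryB A B i j : (A - B) i j = A i j - B i j.
Proof. by rewrite !mxE. Qed.

Lemma entry_tr (A : 'M[R]_(k, m)) i j : A^T i j = A j i.
Proof. by rewrite mxE. Qed.

End Entries.

(** * Farkas' lemma *)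

Section Farkas.
Variable R : realFieldType.

Definition dotr N (u v : 'rV[R]_N) : R := \sum_j u 0 j * v 0 j.

Lemma dotrC N (u v : 'rV[R]_N) : dotr u v = dotr v u.
Proof. by apply: eq_bigr => j _; rewrite mulrC. Qed.

Lemma dotrDr N (u v w : 'rV[R]_N) : dotr w (u + v) = dotr w u + dotr w v.
Proof. by rewrite /dotr -big_split; apply: eq_bigr => j _; rewrite mxE mulrDr. Qed.

Lemma dotrZr N a (u w : 'rV[R]_N) : dotr w (a *: u) = a * dotr w u.
Proof. by rewrite /dotr mulr_sumr; apply: eq_bigr => j _; rewrite mxE mulrCA. Qed.

Lemma dotrNr N (u w : 'rV[R]_N) : dotr w (- u) = - dotr w u.
Proof. by rewrite -scaleN1r dotrZr mulN1r. Qed.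

Lemma dotrBr N (u v w : 'rV[R]_N) : dotr w (u - v) = dotr w u - dotr w v.
Proof. by rewrite dotrDr dotrNr. Qed.

Lemma dotrZl N a (u w : 'rV[R]_N) : dotr (a *: u) w = a * dotr u w.
Proof. by rewrite dotrC dotrZr dotrC. Qed.

Lemma dotrBl N (u v w : 'rV[R]_N) : dotr (u - v) w = dotr u w - dotr v w.
Proof. by rewrite dotrC dotrBr !(dotrC w). Qed.

Lemma dotr0 N (u : 'rV[R]_N) : dotr u 0 = 0.
Proof. by rewrite -(scale0r 0) dotrZr mul0r. Qed.

Lemma dotr_trmx N (u v : 'rV[R]_N) : dotr u v = (v *m u^T) 0 0.
Proof. by rewrite mxE; apply: eq_bigr => j _; rewrite mxE mulrC. Qed.

Lemma dotr_gt0 N (b : 'rV[R]_N) : b != 0 -> 0 < dotr b b.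
Proof.
move=> bn0; have [j bj] : exists j, b 0 j != 0.
  apply/existsP; apply: contraR bn0; rewrite negb_exists => /forallP b0.
  by apply/eqP/matrixP => i j; rewrite mxE (ord1 i); apply/eqP/negPn/b0.
rewrite /dotr (bigD1 j) //= ltr_pwDl ?sumr_ge0 // => [|k _]; last by rewrite -expr2 sqr_ge0.
by rewrite -expr2 lt_def sqr_ge0 sqrf_eq0 bj.
Qed.

Definition in_cone N m (A : 'I_m -> 'rV[R]_N) (b : 'rV[R]_N) :=
  exists2 mu : 'I_m -> R, (forall i, 0 <= mu i) & b = \sum_i mu i *: A i.

Lemma in_cone_cons N m (A : 'I_m.+1 -> 'rV[R]_N) b c :
  0 <= c -> in_cone (fun i => A (lift ord0 i)) (b - c *: A ord0) -> in_cone A b.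
Proof.
move=> c_ge0 [mu mu_ge0 Eb]; exists (fun i => oapp mu c (unlift ord0 i)).
  by move=> i; case: (unlift ord0 i).
rewrite big_ord_recl unlift_none /= -[b](subrK (c *: A ord0)) Eb addrC.
by congr (_ + _); apply: eq_bigr => i _; rewrite liftK.
Qed.

Lemma farkas N m (A : 'I_m -> 'rV[R]_N) (b : 'rV[R]_N) :
  in_cone A b \/ exists2 y, (forall i, 0 <= dotr y (A i)) & dotr y b < 0.
Proof.
elim: m A b => [|m IH] A b.
  have [->|bn0] := eqVneq b 0; first by left; exists (fun _ => 0); rewrite ?big_ord0.
  by right; exists (- b) => [[]//|]; rewrite dotrC dotrNr oppr_lt0 dotr_gt0.
pose a := A ord0; pose A' i := A (lift ord0 i).
have [b_in|[y yA' yb]] := IH A' b.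
  by left; apply: (@in_cone_cons _ _ _ _ 0); rewrite ?scale0r ?subr0.
have [ya|ya] := leP 0 (dotr y a).
  right; exists y => // i.
  by case: (unliftP ord0 i) => [j|] ->; [apply: yA'|].
(* [y] separates [b] from the other generators but not from [a]: project
   everything along [a] onto the kernel of [y] and recurse. *)
pose proj v := v - (dotr y v / dotr y a) *: a.
have [[mu mu_ge0 Eb]|[y' y'A y'b]] := IH (proj \o A') (proj b).
  left; pose c := (dotr y b - \sum_i mu i * dotr y (A' i)) / dotr y a.
  apply: (@in_cone_cons _ _ _ _ c).
    rewrite ler_ndivlMr // mul0r subr_le0; apply: le_trans (ltW yb) _.
    by apply: sumr_ge0 => i _; rewrite mulr_ge0.
  exists mu => //; apply/eqP; rewrite subr_eq.
  have sum_proj : \sum_i mu i *: proj (A' i) =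
      \sum_i mu i *: A' i - ((\sum_i mu i * dotr y (A' i)) / dotr y a) *: a.
    rewrite mulr_suml scaler_suml -sumrB; apply: eq_bigr => i _.
    by rewrite scalerBr scalerA mulrA.
  have -> : b = proj b + (dotr y b / dotr y a) *: a by rewrite subrK.
  by rewrite Eb sum_proj -addrA [- _ + _]addrC -scalerBl /c mulrBl.
right; have ya0 : dotr y a != 0 by rewrite lt_eqF.
pose y'' := y' - (dotr y' a / dotr y a) *: y.
have yproj v : dotr y'' v = dotr y' (proj v).
  rewrite dotrBl dotrBr dotrZl dotrZr; congr (_ - _).
  by rewrite mulrAC [RHS]mulrAC (mulrC (dotr y' a)).
exists y'' => [i|]; last by rewrite yproj.
rewrite yproj; case: (unliftP ord0 i) => [j|] ->; first exact: y'A.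
by rewrite /proj -/a divff // scale1r subrr dotr0.
Qed.

Lemma convex_hull_or_separated N m (P : 'I_m -> 'rV[R]_N) (z : 'rV[R]_N) :
  (exists c : 'I_m -> R,
     [/\ forall i, 0 <= c i, \sum_i c i = 1 & z = \sum_i c i *: P i]) \/
  (exists phi : 'rV[R]_N, forall i, dotr phi z < dotr phi (P i)).
Proof.
pose hom (u : 'rV[R]_N) : 'rV[R]_(N + 1) := row_mx u (const_mx 1).
have [[mu mu_ge0 Ez]|[y yP yz]] := farkas (hom \o P) (hom z).
  left; exists mu; split=> //.
    have := congr1 (fun u : 'rV_(N + 1) => u 0 (rshift N ord0)) Ez.
    rewrite row_mxEr mxE summxE => ->; apply: eq_bigr => i _.
    by rewrite mxE row_mxEr mxE mulr1.
  apply/rowP => j; have := congr1 (fun u : 'rV_(N + 1) => u 0 (lshift 1 j)) Ez.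
  rewrite row_mxEl summxE => ->; rewrite summxE; apply: eq_bigr => i _.
  by rewrite mxE row_mxEl mxE.
right; exists (lsubmx y) => i.
have dotr_hom u : dotr y (hom u) = dotr (lsubmx y) u + rsubmx y 0 0.
  rewrite /dotr big_split_ord big_ord1 /=; congr (_ + _).
    by apply: eq_bigr => j _; rewrite row_mxEl mxE.
  by rewrite row_mxEr !mxE mulr1.
by rewrite -(ltrD2r (rsubmx y 0 0)) -!dotr_hom (lt_le_trans yz (yP i)).
Qed.

End Farkas.

(** * Cones generated by integral vectors *)

Section ConicHull.
Variables (R : realFieldType) (V : lmodType R).

Definition conic (S : seq V) (x : V) :=
  exists s : seq (R * V),
    (forall e, e \in s -> 0 <= e.1 /\ e.2 \in S) /\ x = \sum_(e <- s) e.1 *: e.2.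

Lemma conic0 S : conic S 0.
Proof. by exists [::]; rewrite big_nil. Qed.

Lemma conic_mem S v : v \in S -> conic S v.
Proof.
by move=> vS; exists [:: (1, v)]; rewrite big_seq1 scale1r; split=> // e /[!inE] /eqP->.
Qed.

Lemma conicD S x y : conic S x -> conic S y -> conic S (x + y).
Proof.
move=> [s [s_ok ->]] [t [t_ok ->]]; exists (s ++ t); rewrite big_cat; split=> // e.
by rewrite mem_cat => /orP[/s_ok|/t_ok].
Qed.

Lemma conicZ S k x : 0 <= k -> conic S x -> conic S (k *: x).
Proof.
move=> k_ge0 [s [s_ok ->]]; exists [seq (k * e.1, e.2) | e <- s].
split=> [_ /mapP[e /s_ok[e1_ge0 e2S] ->]|]; first by rewrite mulr_ge0.
by rewrite big_map scaler_sumr; apply: eq_bigr => e _; rewrite scalerA.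
Qed.

Lemma conic_sum S I (r : seq I) (P : pred I) (F : I -> V) :
  (forall i, P i -> conic S (F i)) -> conic S (\sum_(i <- r | P i) F i).
Proof. by apply: big_ind; [apply: conic0 | apply: conicD]. Qed.

Lemma conic_sub S S' x : {subset S <= S'} -> conic S x -> conic S' x.
Proof. by move=> sSS' [s [s_ok ->]]; exists s; split=> // e /s_ok[? /sSS']. Qed.

Lemma sum_cross_pairs I J (r1 : seq I) (r2 : seq J) (a fu : I -> R) (u : I -> V)
    (b fw : J -> R) (w : J -> V) :
  \sum_(i <- r1) \sum_(j <- r2) (a i * b j) *: (fu i *: w j - fw j *: u i) =
  (\sum_(i <- r1) a i * fu i) *: \sum_(j <- r2) b j *: w j -
  (\sum_(j <- r2) b j * fw j) *: \sum_(i <- r1) a i *: u i.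
Proof.
rewrite scaler_suml [X in _ - X]scaler_sumr -sumrB; apply: eq_bigr => i _.
rewrite scaler_sumr [X in _ - X]scaler_suml -sumrB; apply: eq_bigr => j _.
by rewrite scalerBr !scalerA; congr (_ *: _ - _ *: _); ring.
Qed.

End ConicHull.

Section FourierMotzkin.
Variables (R : realFieldType) (V : lmodType R) (f : V -> R).
Hypotheses (fD : forall u v, f (u + v) = f u + f v)
           (fZ : forall k u, f (k *: u) = k * f u).

Definition fourier_motzkin (S : seq V) : seq V :=
  [seq v <- S | f v <= 0] ++
  [seq f p *: q - f q *: p | p <- [seq p <- S | 0 < f p], q <- [seq q <- S | f q < 0]].

Lemma f_sum I (r : seq I) (P : pred I) (F : I -> V) :
  f (\sum_(i <- r | P i) F i) = \sum_(i <- r | P i) f (F i).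
Proof.
have f0 : f 0 = 0 by rewrite -(scale0r 0) fZ mul0r.
exact: (big_morph f fD f0).
Qed.

Section Combination.
Variables (S : seq V) (s : seq (R * V)).
Hypothesis s_ok : forall e, e \in s -> 0 <= e.1 /\ e.2 \in S.

Lemma sum_by_sign (W : nmodType) (G : R * V -> W) : \sum_(e <- s) G e =
  \sum_(e <- s | f e.2 == 0) G e + \sum_(e <- s | f e.2 < 0) G e +
  \sum_(e <- s | 0 < f e.2) G e.
Proof.
rewrite [\sum_(e <- s | f e.2 == 0) _]big_mkcond [\sum_(e <- s | f e.2 < 0) _]big_mkcond.
rewrite [\sum_(e <- s | 0 < f e.2) _]big_mkcond -!big_split; apply: eq_bigr => e _ /=.
by case: ltgtP; rewrite ?addr0 ?add0r.
Qed.

Lemma conic_fourier_motzkin_nonpos (P : pred R) : (forall t, P t -> t <= 0) ->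
  conic (fourier_motzkin S) (\sum_(e <- s | P (f e.2)) e.1 *: e.2).
Proof.
move=> P_le0; rewrite big_seq_cond; apply: conic_sum => e /andP[/s_ok[e1_ge0 e2S] Pe].
apply: conicZ e1_ge0 (conic_mem _).
by rewrite mem_cat mem_filter P_le0 ?e2S.
Qed.

Lemma conic_fourier_motzkin_cross : conic (fourier_motzkin S)
  (\sum_(p <- [seq e <- s | 0 < f e.2]) \sum_(q <- [seq e <- s | f e.2 < 0])
     (p.1 * q.1) *: (f p.2 *: q.2 - f q.2 *: p.2)).
Proof.
rewrite big_seq; apply: conic_sum => p /[!mem_filter] /andP[fp /s_ok[p1_ge0 p2S]].
rewrite big_seq; apply: conic_sum => q /[!mem_filter] /andP[fq /s_ok[q1_ge0 q2S]].
apply/conicZ/conic_mem; first exact: mulr_ge0.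
rewrite mem_cat (allpairs_f (fun p q => f p *: q - f q *: p)) ?orbT //.
  by rewrite mem_filter fp.
by rewrite mem_filter fq.
Qed.

Lemma sum_pos_part_eq0 : \sum_(e <- s | 0 < f e.2) e.1 * f e.2 = 0 ->
  \sum_(e <- s | 0 < f e.2) e.1 *: e.2 = 0.
Proof.
move/eqP; rewrite big_seq_cond psumr_eq0 => [/allP s0|e]; last first.
  by case/andP=> /s_ok[e1_ge0 _] fe; exact: mulr_ge0 e1_ge0 (ltW fe).
rewrite big_seq_cond big1 // => e /andP[es fe]; move: (s0 e es).
by rewrite es fe mulf_eq0 (gt_eqF fe) orbF => /eqP->; rewrite scale0r.
Qed.

Lemma conic_fourier_motzkin_sum : f (\sum_(e <- s) e.1 *: e.2) <= 0 ->
  conic (fourier_motzkin S) (\sum_(e <- s) e.1 *: e.2).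
Proof.
move=> fx; set Sp := \sum_(e <- s | 0 < f e.2) e.1 * f e.2.
pose Sn := - \sum_(e <- s | f e.2 < 0) e.1 * f e.2.
have Sp_ge0 : 0 <= Sp.
  rewrite /Sp big_seq_cond sumr_ge0 // => e /andP[/s_ok[e1_ge0 _] fe].
  exact: mulr_ge0 e1_ge0 (ltW fe).
have Sp_le_Sn : Sp <= Sn.
  move: fx; rewrite f_sum (eq_bigr (fun e => e.1 * f e.2)) => [|e _]; last exact: fZ.
  by rewrite sum_by_sign big1 => [|e /eqP->]; rewrite ?mulr0 // /Sp /Sn; lra.
have xZ_conic : conic (fourier_motzkin S) (\sum_(e <- s | f e.2 == 0) e.1 *: e.2).
  by apply: (@conic_fourier_motzkin_nonpos (fun t => t == 0)) => t /eqP->.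
have xN_conic : conic (fourier_motzkin S) (\sum_(e <- s | f e.2 < 0) e.1 *: e.2).
  by apply: (@conic_fourier_motzkin_nonpos (fun t => t < 0)) => t /ltW.
rewrite sum_by_sign; have [Sn0|Sn_gt0] : Sn = 0 \/ 0 < Sn.
  by have := le_trans Sp_ge0 Sp_le_Sn; rewrite le_eqVlt eq_sym => /orP[/eqP|]; [left|right].
  rewrite sum_pos_part_eq0 ?addr0; first exact: conicD.
  by apply/eqP; rewrite -/Sp eq_le Sp_ge0 andbT -Sn0.
set xN := \sum_(e <- s | f e.2 < 0) _; set xP := \sum_(e <- s | 0 < f e.2) _.
have cross : Sp *: xN + Sn *: xP = \sum_(p <- [seq e <- s | 0 < f e.2])
    \sum_(q <- [seq e <- s | f e.2 < 0]) (p.1 * q.1) *: (f p.2 *: q.2 - f q.2 *: p.2).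
  by rewrite (sum_cross_pairs _ _ fst (fun e => f e.2) snd) !big_filter scaleNr.
rewrite -addrA; have -> : xN + xP = (1 - Sp / Sn) *: xN + Sn^-1 *: (Sp *: xN + Sn *: xP).
  rewrite scalerDr !scalerA mulVf ?gt_eqF // scale1r addrA -scalerDl.
  by rewrite [Sn^-1 * Sp]mulrC subrK scale1r.
apply: conicD => //; apply: conicD.
  by apply: conicZ => //; rewrite subr_ge0 ler_pdivrMr // mul1r.
by rewrite cross; apply/conicZ/conic_fourier_motzkin_cross; rewrite invr_ge0 ltW.
Qed.

End Combination.
Lemma conic_fourier_motzkin S x : conic S x -> f x <= 0 -> conic (fourier_motzkin S) x.
Proof. by case=> s [s_ok ->]; apply: conic_fourier_motzkin_sum. Qed.

End FourierMotzkin.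

Local Notation intmx := (map_mx intr).

Lemma intmx_pairing (R : realFieldType) n (a : 'rV[int]_n) (l : 'cV[int]_n) :
  (intmx a *m intmx l) 0 0 = (pairing a l)%:~R :> R.
Proof. by rewrite -map_mxM mxE. Qed.

Lemma pairingB n (a : 'rV[int]_n) l m : pairing a (l - m) = pairing a l - pairing a m.
Proof. by rewrite /pairing mulmxBr; set u := a *m l; set v := a *m m; rewrite !mxE. Qed.

Lemma pairingZ n (a : 'rV[int]_n) c l : pairing a (c *: l) = c * pairing a l.
Proof. by rewrite /pairing -scalemxAr mxE. Qed.

Section IntegralCones.
Variables (R : realFieldType) (n : nat).

Definition unit_gens : seq 'cV[int]_n :=
  [seq delta_mx j 0 | j <- enum 'I_n] ++ [seq - delta_mx j 0 | j <- enum 'I_n].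

Lemma conic_unit_gens (x : 'cV[R]_n) : conic (map intmx unit_gens) x.
Proof.
rewrite [x]matrix_sum_delta; apply: conic_sum => j _; rewrite big_ord1.
have unit_gen (g : 'cV[int]_n) :
    g \in unit_gens -> conic (map intmx unit_gens) (intmx g : 'cV[R]_n).
  by move=> gG; apply/conic_mem/map_f.
have -> : delta_mx j 0 = intmx (delta_mx j 0 : 'cV[int]_n) :> 'cV[R]_n.
  by apply/matrixP => a b; rewrite !mxE; case: (_ && _).
have [xj_ge0|xj_lt0] := leP 0 (x j 0).
  by apply: conicZ (unit_gen _ _) => //; rewrite mem_cat (map_f (fun j => delta_mx j 0)) ?mem_enum.
rewrite -[x j 0]opprK scaleNr -scalerN -map_mxN.
apply: conicZ (unit_gen _ _); first by rewrite oppr_ge0 ltW.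
by rewrite mem_cat orbC (map_f (fun j => - delta_mx j 0)) ?mem_enum.
Qed.

Definition fourier_motzkin_int (a : 'rV[int]_n) (G : seq 'cV[int]_n) : seq 'cV[int]_n :=
  [seq g <- G | pairing a g <= 0] ++
  [seq pairing a p *: q - pairing a q *: p |
     p <- [seq p <- G | 0 < pairing a p], q <- [seq q <- G | pairing a q < 0]].

Lemma fourier_motzkin_int_le0 (A : seq 'rV[int]_n) a G g :
  (forall g', g' \in G -> forall b, b \in A -> pairing b g' <= 0) ->
  g \in fourier_motzkin_int a G -> forall b, b \in a :: A -> pairing b g <= 0.
Proof.
move=> G_le0; rewrite mem_cat => /orP[|/allpairsP[[p q] /=]].
  by rewrite mem_filter => /andP[ag gG] b /[!inE] /orP[/eqP->//|]; apply: G_le0.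
rewrite !mem_filter => -[/andP[ap pG] /andP[aq qG] ->] b /[!inE].
rewrite pairingB !pairingZ => /orP[/eqP->|bA]; first by rewrite mulrC subrr.
rewrite subr_le0 (@le_trans _ _ 0) //.
  by rewrite pmulr_rle0 ?G_le0.
by rewrite nmulr_rge0 ?G_le0.
Qed.

Lemma fourier_motzkin_intmx a G :
  {subset fourier_motzkin (fun y : 'cV[R]_n => (intmx a *m y) 0 0) (map intmx G)
     <= map intmx (fourier_motzkin_int a G)}.
Proof.
move=> v; rewrite mem_cat => /orP[|/allpairsP[[p' q'] /=]].
  rewrite mem_filter => /andP[ag /mapP[g gG vE]]; subst v.
  rewrite intmx_pairing lerz0 in ag.
  by rewrite map_f // mem_cat mem_filter ag gG.
rewrite !mem_filter => -[/andP[ap /mapP[p pG pE]] /andP[aq /mapP[q qG qE]] ->].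
subst p' q'; rewrite intmx_pairing ltr0z in ap; rewrite intmx_pairing ltrz0 in aq.
apply/mapP; exists (pairing a p *: q - pairing a q *: p); last first.
  by rewrite map_mxB !map_mxZ !intmx_pairing.
rewrite mem_cat orbC (allpairs_f (fun p q => pairing a p *: q - pairing a q *: p)) //.
  by rewrite mem_filter ap.
by rewrite mem_filter aq.
Qed.

Lemma polyhedral_cone_int_gens (A : seq 'rV[int]_n) : exists G : seq 'cV[int]_n,
  (forall g, g \in G -> forall a, a \in A -> pairing a g <= 0) /\
  forall x : 'cV[R]_n,
    (forall a, a \in A -> (intmx a *m x) 0 0 <= 0) -> conic (map intmx G) x.
Proof.
elim: A => [|a A [G [G_le0 G_gen]]].
  by exists unit_gens; split=> // x _; apply: conic_unit_gens.
exists (fourier_motzkin_int a G); split=> [g|x x_le0]; first exact: fourier_motzkin_int_le0.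
apply: conic_sub (@fourier_motzkin_intmx a G) _; apply: conic_fourier_motzkin.
- by move=> u v; rewrite mulmxDr mxE.
- by move=> k u; rewrite -scalemxAr mxE.
- by apply: G_gen => b bA; apply: x_le0; rewrite inE bA orbT.
- exact/x_le0/mem_head.
Qed.

Lemma int_cone_ge0 (A : seq 'rV[int]_n) (d : 'rV[R]_n) :
  (forall l : 'cV[int]_n,
     (forall a, a \in A -> pairing a l <= 0) -> 0 <= (d *m intmx l) 0 0) ->
  forall x : 'cV[R]_n, (forall a, a \in A -> (intmx a *m x) 0 0 <= 0) ->
    0 <= (d *m x) 0 0.
Proof.
have [G [G_le0 G_gen]] := polyhedral_cone_int_gens A.
move=> d_ge0 x /G_gen[s [s_ok ->]].
rewrite mulmx_sumr summxE big_seq; apply: sumr_ge0 => e /s_ok[e1_ge0 /mapP[g gG ->]].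
by rewrite -scalemxAr mxE mulr_ge0 // d_ge0 // => a; apply: G_le0.
Qed.

End IntegralCones.

(** * The Weyl group *)

Section WeylGroup.
Variables (n : nat) (rd : seq ('rV[int]_n * 'cV[int]_n)).
Hypothesis hrd : root_datum rd.
Implicit Types (p : 'rV[int]_n * 'cV[int]_n) (w : 'M[int]_n).

Definition roots := map fst rd.
Definition coroots := map snd rd.

Lemma pairing_coroot p : p \in rd -> pairing p.1 p.2 = 2.
Proof. by case: hrd => _ + _ _ _; apply. Qed.

Lemma refl_mulmx p l : refl p *m l = l - pairing p.1 l *: p.2.
Proof. by rewrite /refl mulmxBl mul1mx -mulmxA [p.1 *m l]mx11_scalar mul_mx_scalar. Qed.

Lemma mulmx_refl p b : b *m refl p = b - pairing b p.2 *: p.1.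
Proof. by rewrite /refl mulmxBr mulmx1 mulmxA [b *m p.2]mx11_scalar mul_scalar_mx. Qed.

Lemma refl_sqr p : p \in rd -> refl p *m refl p = 1%:M.
Proof.
move=> pr; have coroot_root : p.2 *m p.1 *m (p.2 *m p.1) = 2 *: (p.2 *m p.1).
  rewrite mulmxA -(mulmxA p.2) [p.1 *m p.2]mx11_scalar.
  by rewrite -[_ 0 0]/(pairing p.1 p.2) pairing_coroot // mul_mx_scalar -scalemxAl.
rewrite /refl mulmxBl mul1mx mulmxBr mulmx1 coroot_root.
by apply/matrixP => i j; rewrite !mxE; ring.
Qed.

Lemma inW_mul v w : inW rd v -> inW rd w -> inW rd (v *m w).
Proof.
elim=> [|p v' pr _ IH] wW; first by rewrite mul1mx.
by rewrite -mulmxA; apply: inWs => //; apply: IH.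
Qed.

Lemma inW_refl p : p \in rd -> inW rd (refl p).
Proof. by move=> pr; rewrite -[refl p]mulmx1; apply: inWs => //; apply: inW1. Qed.

Lemma inW_left_inverse w : inW rd w -> exists2 w', inW rd w' & w' *m w = 1%:M.
Proof.
elim=> [|p w0 pr _ [w' w'W w'w0]]; first by exists 1%:M; [apply: inW1 | rewrite mulmx1].
exists (w' *m refl p); first by apply: inW_mul => //; apply: inW_refl.
by rewrite mulmxA -(mulmxA w') refl_sqr // mulmx1.
Qed.

Lemma inW_unit w : inW rd w -> w \in unitmx.
Proof. by case/inW_left_inverse => w' _ /mulmx1_unit[]. Qed.

Lemma inW_invmx w : inW rd w -> inW rd (invmx w).
Proof.
move=> wW; have [w' w'W w'w] := inW_left_inverse wW.
by rewrite -[invmx w]mul1mx -w'w -mulmxA mulmxV ?inW_unit ?mulmx1.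
Qed.

Lemma root_mulW w b : inW rd w -> b \in roots -> b *m w \in roots.
Proof.
move=> wW; elim: wW b => [|p w' pr _ IH] b bR; first by rewrite mulmx1.
rewrite mulmxA mulmx_refl; apply: IH; case/mapP: bR => q qr ->.
by case: hrd => _ _ + _ _; apply.
Qed.

Lemma perm_roots_refl p : p \in rd -> perm_eq [seq b *m refl p | b <- roots] roots.
Proof.
move=> pr; apply: perm_map_stable; first by case: hrd => -[].
  by apply: (can_inj (g := fun b => b *m refl p)) => b; rewrite -mulmxA refl_sqr ?mulmx1.
by move=> _ /mapP[b bR ->]; apply/root_mulW/bR/inW_refl.
Qed.

Lemma perm_coroots_refl p : p \in rd -> perm_eq [seq refl p *m c | c <- coroots] coroots.
Proof.
move=> pr; apply: perm_map_stable; first by case: hrd => -[].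
  by apply: (can_inj (g := mulmx (refl p))) => c; rewrite mulmxA refl_sqr ?mul1mx.
move=> _ /mapP[_ /mapP[q qr ->] ->]; rewrite refl_mulmx.
by case: hrd => _ _ _ + _; apply.
Qed.

Inductive coroot_span : 'cV[int]_n -> Prop :=
  | coroot_span0 : coroot_span 0
  | coroot_spanS p k l : p \in rd -> coroot_span l -> coroot_span (k *: p.2 + l).

Lemma coroot_spanD l m : coroot_span l -> coroot_span m -> coroot_span (l + m).
Proof.
elim=> [|p k l' pr _ IH] mS; first by rewrite add0r.
by rewrite -addrA; apply: coroot_spanS => //; apply: IH.
Qed.

Lemma coroot_spanN l : coroot_span l -> coroot_span (- l).
Proof.
elim=> [|p k l' pr _ IH]; first by rewrite oppr0; apply: coroot_span0.
by rewrite opprD -scaleNr; apply: coroot_spanS.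
Qed.

Lemma coroot_span_mulW w l : inW rd w -> coroot_span (w *m l - l).
Proof.
elim=> [|p w' pr _ IH]; first by rewrite mul1mx subrr; apply: coroot_span0.
by rewrite -mulmxA refl_mulmx -addrAC -scaleNr addrC; apply: coroot_spanS.
Qed.

End WeylGroup.

(** * Invariant forms, finiteness of W, antidominant conjugates *)

Section SquareForms.
Variables (F : realFieldType) (n : nat) (S : seq 'rV[F]_n).

Definition sqform (x y : 'cV[F]_n) : F := \sum_(r <- S) (r *m x) 0 0 * (r *m y) 0 0.

Lemma sqformC x y : sqform x y = sqform y x.
Proof. by apply: eq_bigr => r _; rewrite mulrC. Qed.

Lemma sqformDl x y z : sqform (x + y) z = sqform x z + sqform y z.
Proof. by rewrite -big_split; apply: eq_bigr => r _; rewrite mulmxDr mxE mulrDl. Qed.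

Lemma sqformZl k x y : sqform (k *: x) y = k * sqform x y.
Proof. by rewrite mulr_sumr; apply: eq_bigr => r _; rewrite -scalemxAr mxE mulrA. Qed.

Lemma sqformNl x y : sqform (- x) y = - sqform x y.
Proof. by rewrite -scaleN1r sqformZl mulN1r. Qed.

Lemma sqform_ge_term x r : r \in S -> (r *m x) 0 0 ^+ 2 <= sqform x x.
Proof.
move=> rS; rewrite /sqform (big_rem r rS) /= -expr2 lerDl.
by rewrite big_seq; apply: sumr_ge0 => r' _; rewrite -expr2 sqr_ge0.
Qed.

Lemma sqform_gt0 x r : r \in S -> (r *m x) 0 0 != 0 -> 0 < sqform x x.
Proof.
move=> rS rx; apply: lt_le_trans (sqform_ge_term x rS).
by rewrite lt_def sqrf_eq0 rx sqr_ge0.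
Qed.

Lemma sqform_eq0 x : sqform x x = 0 -> forall r, r \in S -> (r *m x) 0 0 = 0.
Proof.
move=> x0 r rS; apply/eqP; rewrite -sqrf_eq0 eq_le sqr_ge0 andbT.
by rewrite -x0 sqform_ge_term.
Qed.

Lemma sqform_perm M x y :
  perm_eq [seq r *m M | r <- S] S -> sqform (M *m x) (M *m y) = sqform x y.
Proof.
move=> SM; rewrite /sqform -[RHS](perm_big _ SM) big_map.
by apply: eq_bigr => r _; rewrite !mulmxA.
Qed.

Lemma sqform_reflection (u : 'rV[F]_n) (v y : 'cV[F]_n) :
  perm_eq [seq r *m (1%:M - v *m u) | r <- S] S -> (u *m v) 0 0 = 2 ->
  2 * sqform v y = (u *m y) 0 0 * sqform v v.
Proof.
move=> SM uv2; set M := 1%:M - v *m u.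
have Mz z : M *m z = z - (u *m z) 0 0 *: v.
  by rewrite /M mulmxBl mul1mx -mulmxA [X in v *m X]mx11_scalar mul_mx_scalar.
have Mv : M *m v = - v by rewrite Mz uv2 scaler_nat mulr2n opprD addrA subrr sub0r.
have := sqform_perm v y SM; rewrite Mv Mz sqformNl (sqformC v) sqformDl sqformNl sqformZl.
by rewrite (sqformC y); lra.
Qed.

End SquareForms.

Section RootForms.
Variables (n : nat) (rd : seq ('rV[int]_n * 'cV[int]_n)) (F : realFieldType).
Hypothesis hrd : root_datum rd.
Implicit Types p : 'rV[int]_n * 'cV[int]_n.
Local Notation intmx := (map_mx (intr : int -> F)).

Definition rootform := sqform [seq intmx b | b <- roots rd].

Definition corootform (a b : 'rV[F]_n) :=
  sqform [seq (intmx c)^T | c <- coroots rd] a^T b^T.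

Lemma intmx_refl p : intmx (refl p) = 1%:M - intmx p.2 *m intmx p.1.
Proof. by rewrite map_mxB map_mx1 map_mxM. Qed.

Lemma rootform_coroot p y : p \in rd ->
  2 * rootform (intmx p.2) y = (intmx p.1 *m y) 0 0 * rootform (intmx p.2) (intmx p.2).
Proof.
move=> pr; apply: sqform_reflection; last by rewrite intmx_pairing (pairing_coroot hrd pr).
have -> : [seq r *m (1%:M - intmx p.2 *m intmx p.1) | r <- [seq intmx b | b <- roots rd]]
    = [seq intmx b | b <- [seq b *m refl p | b <- roots rd]].
  by rewrite -!map_comp; apply: eq_map => b /=; rewrite map_mxM intmx_refl.
by rewrite perm_map // (perm_roots_refl hrd pr).
Qed.

Lemma corootform_root p b : p \in rd ->
  2 * corootform (intmx p.1) b = (b *m intmx p.2) 0 0 * corootform (intmx p.1) (intmx p.1).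
Proof.
move=> pr; rewrite /corootform -[(b *m _) 0 0]entry_tr trmx_mul.
apply: sqform_reflection; last by rewrite -trmx_mul entry_tr intmx_pairing (pairing_coroot hrd pr).
have -> : [seq r *m (1%:M - (intmx p.1)^T *m (intmx p.2)^T)
           | r <- [seq (intmx c)^T | c <- coroots rd]]
    = [seq (intmx c)^T | c <- [seq refl p *m c | c <- coroots rd]].
  rewrite -!map_comp; apply: eq_map => c /=.
  by rewrite map_mxM trmx_mul intmx_refl; congr (_ *m _); rewrite linearB /= trmx1 trmx_mul.
by rewrite perm_map // (perm_coroots_refl hrd pr).
Qed.

Lemma rootform_coroot_gt0 p : p \in rd -> 0 < rootform (intmx p.2) (intmx p.2).
Proof.
move=> pr; apply: (@sqform_gt0 _ _ _ _ (intmx p.1)); first exact/map_f/map_f.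
by rewrite intmx_pairing (pairing_coroot hrd pr) intr_eq0.
Qed.

Lemma corootform_root_gt0 p : p \in rd -> 0 < corootform (intmx p.1) (intmx p.1).
Proof.
move=> pr; apply: (@sqform_gt0 _ _ _ _ (intmx p.2)^T); first exact/map_f/map_f.
by rewrite -trmx_mul entry_tr intmx_pairing (pairing_coroot hrd pr) intr_eq0.
Qed.

Lemma corootformE a b :
  corootform a b = \sum_(c <- coroots rd) (a *m intmx c) 0 0 * (b *m intmx c) 0 0.
Proof.
rewrite /corootform /sqform big_map; apply: eq_bigr => c _.
by rewrite -!trmx_mul !entry_tr.
Qed.

Lemma corootformDl a a' b : corootform (a + a') b = corootform a b + corootform a' b.
Proof. by rewrite /corootform linearD sqformDl. Qed.

Lemma corootformZl k a b : corootform (k *: a) b = k * corootform a b.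
Proof. by rewrite /corootform linearZ sqformZl. Qed.

Lemma coroot_span_orth_roots d : coroot_span rd d ->
  (forall b, b \in roots rd -> pairing b d = 0) -> d = 0.
Proof.
move=> dS d_orth.
(* [u] represents the functional [b |-> b d] for the invariant form; lying in
   the span of the roots it is orthogonal to [d], so [corootform u u = 0]. *)
have [u u_repr u_orth] : exists2 u : 'rV[F]_n,
    forall b : 'rV[F]_n, (b *m intmx d) 0 0 = corootform u b &
    forall y : 'cV[F]_n,
      (forall b, b \in roots rd -> (intmx b *m y) 0 0 = 0) -> (u *m y) 0 0 = 0.
  elim: dS {d_orth} => [|p k l pr _ [u u_repr u_orth]].
    exists 0 => [b|y _]; last by rewrite mul0mx mxE.
    by rewrite map_mx0 mulmx0 mxE -(scale0r 0) corootformZl mul0r.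
  pose c := k%:~R * 2 / corootform (intmx p.1) (intmx p.1).
  exists (c *: intmx p.1 + u) => [b|y y_orth].
    rewrite map_mxD map_mxZ mulmxDr -scalemxAr entryD entryZ u_repr.
    rewrite corootformDl corootformZl; congr (_ + _).
    have cf_gt0 := corootform_root_gt0 pr; have := corootform_root b pr.
    rewrite /c; set X := corootform _ b; set Z := corootform _ _ => XE.
    have -> : X = (b *m intmx p.2) 0 0 * Z / 2 by rewrite -XE [2 * X]mulrC mulfK ?pnatr_eq0.
    by field; rewrite gt_eqF.
  rewrite mulmxDl -scalemxAl entryD entryZ y_orth ?u_orth ?mulr0 ?addr0 //.
  exact/map_f.
have uu0 : corootform u u = 0.
  by rewrite -u_repr; apply: u_orth => b bR; rewrite intmx_pairing d_orth.
have u_coroots c : c \in coroots rd -> (u *m intmx c) 0 0 = 0.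
  move=> cC; rewrite -entry_tr trmx_mul (sqform_eq0 uu0) //.
  exact: (map_f (fun c : 'cV[int]_n => (intmx c)^T)).
apply/matrixP => i j; have := u_repr (delta_mx 0 i).
rewrite corootformE big1_seq => [|c /andP[_ cC]]; last by rewrite u_coroots ?mul0r.
by rewrite -rowE mxE (ord1 j) !mxE => /eqP; rewrite intr_eq0 => /eqP.
Qed.

End RootForms.
Section WeylFinite.
Variables (n : nat) (rd : seq ('rV[int]_n * 'cV[int]_n)).
Hypothesis hrd : root_datum rd.

Lemma inW_enum : exists Wl : seq 'M[int]_n, forall w, inW rd w <-> w \in Wl.
Proof.
apply: (enum_of_injection (inW1 rd) (f := fun w => [seq b *m w | b <- roots rd])
          (S := seqs_over (roots rd) (size (roots rd)))).
  move=> w wW; rewrite -(size_map (fun b => b *m w)); apply: mem_seqs_over.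
  by apply/allP => _ /mapP[b bR ->]; apply: root_mulW.
move=> w w' wW w'W /eq_in_map ww'.
suff wl (l : 'cV[int]_n) : w *m l = w' *m l.
  apply/matrixP => i j; have := congr1 (fun v : 'cV_n => v i 0) (wl (delta_mx j 0)).
  by rewrite -!colE !mxE.
apply/eqP; rewrite -subr_eq0; apply/eqP/(coroot_span_orth_roots rat hrd).
  have -> : w *m l - w' *m l = (w *m l - l) - (w' *m l - l) by rewrite opprB addrA subrK.
  by apply: coroot_spanD; [apply: coroot_span_mulW | apply/coroot_spanN/coroot_span_mulW].
by move=> b bR; rewrite pairingB /pairing !mulmxA ww' // subrr.
Qed.

End WeylFinite.

Section AntidominantConjugates.
Variables (n : nat) (rd : seq ('rV[int]_n * 'cV[int]_n)) (xi : 'cV[int]_n).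
Variable F : realFieldType.
Hypothesis hrd : root_datum rd.
Local Notation intmx := (map_mx (intr : int -> F)).

Definition antidom_real (x : 'cV[F]_n) :=
  forall p, p \in rd -> 0 < pairing p.1 xi -> (intmx p.1 *m x) 0 0 <= 0.

Lemma exists_antidom_real_conj x : exists2 u, inW rd u & antidom_real (intmx u *m x).
Proof.
have [Wl Wl_spec] := inW_enum hrd.
have : 1%:M \in Wl by apply/Wl_spec/inW1.
case: Wl Wl_spec => // a s Wl_spec _.
(* If [p] is positive and pairs positively with [u x], then [refl p *m u]
   has smaller height; so a minimiser of the height is antidominant. *)
pose height u := rootform rd (intmx u *m x) (intmx xi).
have [u /Wl_spec uW umin] := seq_argmin height a s.
exists u => // p pr p_pos; rewrite leNgt; apply/negP => px_pos.
have height_refl : height (refl p *m u) =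
    height u - (intmx p.1 *m (intmx u *m x)) 0 0 * rootform rd (intmx p.2) (intmx xi).
  rewrite /height map_mxM -mulmxA intmx_refl mulmxBl mul1mx -mulmxA.
  rewrite [X in intmx p.2 *m X]mx11_scalar mul_mx_scalar.
  by rewrite /rootform sqformDl sqformNl sqformZl.
have p2xi_gt0 : 0 < rootform rd (intmx p.2) (intmx xi).
  have := rootform_coroot hrd (intmx xi) pr; rewrite intmx_pairing => h2.
  rewrite -(pmulr_rgt0 _ (ltr0n _ 2)) h2 mulr_gt0 ?ltr0z //.
  exact: rootform_coroot_gt0.
have := umin _ (iffLR (Wl_spec _) (inWs pr uW)); rewrite height_refl.
by have := mulr_gt0 px_pos p2xi_gt0; lra.
Qed.

End AntidominantConjugates.

Lemma exists_antidom_conj n (rd : seq ('rV[int]_n * 'cV[int]_n)) xi l :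
  root_datum rd -> exists2 u, inW rd u & antidom rd xi (u *m l).
Proof.
move=> hrd; have [u uW u_anti] := exists_antidom_real_conj xi hrd (map_mx (intr : int -> rat) l).
exists u => // p pr p_pos; have := u_anti p pr p_pos.
by rewrite -map_mxM intmx_pairing lerz0.
Qed.

(** * Cocycles and the proof of the theorem *)

Section AdditiveMaps.
Variables (R : realFieldType) (n : nat).

Definition row_of_additive (f : 'cV[int]_n -> R) : 'rV[R]_n := \row_j f (delta_mx j 0).

Lemma row_of_additiveE (f : 'cV[int]_n -> R) :
  (forall l m, f (l + m) = f l + f m) -> forall l, f l = (row_of_additive f *m intmx l) 0 0.
Proof.
move=> fD; have f0 : f 0 = 0 by have := fD 0 0; rewrite addr0; lra.
have fN l : f (- l) = - f l by have := fD l (- l); rewrite subrr f0; lra.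
have fMn l k : f (l *+ k) = f l *+ k.
  by elim: k => [|k IH]; rewrite ?mulr0n ?f0 // !mulrS fD IH.
have fZ (c : int) l : f (c *: l) = c%:~R * f l.
  rewrite -[c]intz scaler_int intz; case: c => k /=.
    by rewrite fMn mulr_natl.
  by rewrite fN fMn NegzE intrN mulNr mulr_natl.
move=> l; rewrite {1}(matrix_sum_delta l); under eq_bigr => i _ do rewrite big_ord1.
rewrite (big_morph f fD f0) mxE; apply: eq_bigr => j _.
by rewrite fZ !mxE mulrC (ord1 0).
Qed.

End AdditiveMaps.

Section Cocycle.
Variables (n : nat) (rd : seq ('rV[int]_n * 'cV[int]_n)) (xi : 'cV[int]_n).
Variables (R : realFieldType) (K : fieldType) (val : K -> R).
Variable gamma : 'M[int]_n -> 'cV[int]_n -> K.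
Hypothesis hrd : root_datum rd.
Hypothesis hval : forall x y : K, x != 0 -> y != 0 -> val (x * y) = val x + val y.
Hypothesis hg : cocycle rd xi val gamma.

Lemma val_cocycleD w l m : inW rd w ->
  val (gamma w (l + m)) = val (gamma w l) + val (gamma w m).
Proof. by case: hg => g_neq0 gD _ _ _ wW; rewrite gD // hval // g_neq0. Qed.

Lemma val_cocycleM v w l : inW rd v -> inW rd w ->
  val (gamma (v *m w) l) = val (gamma v (w *m l)) + val (gamma w l).
Proof. by case: hg => g_neq0 _ gM _ _ vW wW; rewrite gM // hval // g_neq0. Qed.

Lemma val_cocycle_min v u l : inW rd v -> inW rd u -> antidom rd xi (u *m l) ->
  val (gamma u l) <= val (gamma v l).
Proof.
move=> vW uW ul_anti.
have vu'W : inW rd (v *m invmx u) by apply: inW_mul => //; apply: inW_invmx.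
have -> : v = (v *m invmx u) *m u by rewrite -mulmxA mulVmx ?(inW_unit hrd) ?mulmx1.
by rewrite val_cocycleM // lerDr; case: hg => _ _ _ + _; apply.
Qed.

Lemma gdom_spec l : exists2 u, inW rd u /\ antidom rd xi (u *m l) &
  gdom rd xi gamma l = gamma u l.
Proof.
pose P w := inW rd w /\ antidom rd xi (w *m l).
have P_eps : P (epsilon (inhabits (1%:M : 'M[int]_n)) P).
  by apply: epsilon_spec; have [u uW ul_anti] := exists_antidom_conj xi l hrd; exists u.
by exists (epsilon (inhabits (1%:M : 'M[int]_n)) P).
Qed.

Lemma val_gdom_le v l : inW rd v -> val (gdom rd xi gamma l) <= val (gamma v l).
Proof. by move=> vW; have [u [uW ul_anti] ->] := gdom_spec l; apply: val_cocycle_min. Qed.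

Lemma val_gdomE u l : inW rd u -> antidom rd xi (u *m l) ->
  val (gdom rd xi gamma l) = val (gamma u l).
Proof.
move=> uW ul_anti; have [u' [u'W u'l_anti] ->] := gdom_spec l.
by apply/eqP; rewrite eq_le !val_cocycle_min.
Qed.

Definition cocycle_row w := row_of_additive (fun l => val (gamma w l)).

Lemma cocycle_rowE w l : inW rd w -> val (gamma w l) = (cocycle_row w *m intmx l) 0 0.
Proof. by move=> wW; apply: row_of_additiveE => l1 l2; apply: val_cocycleD. Qed.

Lemma Vgamma_ge_cocycle_row z : Vgamma rd xi val gamma z ->
  forall u (x : 'cV[R]_n), inW rd u -> antidom_real rd xi (intmx u *m x) ->
  (cocycle_row u *m x) 0 0 <= (row_of_additive z *m x) 0 0.
Proof.
move=> [zD z_ge] u x uW ux_anti.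
pose A := [seq p.1 | p <- rd & 0 < pairing p.1 xi].
have u_unit := inW_unit hrd uW.
rewrite -subr_ge0 -entryB -mulmxBl; set d := _ - _.
have -> : d *m x = d *m intmx (invmx u) *m (intmx u *m x).
  by rewrite -mulmxA [_ *m (_ *m x)]mulmxA -map_mxM mulVmx // map_mx1 mul1mx.
apply: (int_cone_ge0 (A := A)) => [l l_anti|]; last first.
  by move=> _ /mapP[p /[!mem_filter] /andP[p_pos pr] ->]; apply: ux_anti.
rewrite -mulmxA -map_mxM mulmxBl entryB -(row_of_additiveE zD) -cocycle_rowE //.
rewrite subr_ge0 -(val_gdomE uW) ?z_ge // mulmxA mulmxV // mul1mx => p pr p_pos.
by apply: l_anti; apply/mapP; exists p => //; rewrite mem_filter pr andbT.
Qed.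

Lemma hull_sub_Vgamma z :
  in_hull (fun p => exists2 w, inW rd w & p = (fun l => - zw val gamma w l)) z ->
  Vgamma rd xi val gamma z.
Proof.
case=> m [c [pt [c_ge0 c_sum ptW zE]]]; split=> [l l'|l].
  rewrite !zE -big_split; apply: eq_bigr => i _ /=.
  have [w wW ->] := ptW i; rewrite /zw !opprK -mulrDr val_cocycleD //.
  exact: inW_invmx.
rewrite zE -[val _]mul1r -c_sum mulr_suml; apply: ler_sum => i _.
apply: ler_wpM2l => //; have [w wW ->] := ptW i; rewrite /zw opprK.
exact/val_gdom_le/inW_invmx.
Qed.

Lemma Vgamma_sub_hull z : Vgamma rd xi val gamma z ->
  in_hull (fun p => exists2 w, inW rd w & p = (fun l => - zw val gamma w l)) z.
Proof.
move=> Vz; have [zD _] := Vz; have [Wl Wl_spec] := inW_enum hrd.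
have [[c [c_ge0 c_sum zE]]|[phi phi_sep]] :=
  convex_hull_or_separated (fun i : 'I_(size Wl) => cocycle_row Wl`_i) (row_of_additive z).
  exists (size Wl), c, (fun i l => - zw val gamma (invmx Wl`_i) l).
  have WlW (i : 'I_(size Wl)) : inW rd Wl`_i by apply/Wl_spec/mem_nth.
  split=> // [i|l]; first by exists (invmx Wl`_i) => //; apply: inW_invmx.
  rewrite (row_of_additiveE zD) zE mulmx_suml summxE; apply: eq_bigr => i _.
  by rewrite /zw opprK invmxK -scalemxAl entryZ cocycle_rowE.
have [u uW ux_anti] := exists_antidom_real_conj xi hrd phi^T.
have uWl : u \in Wl by apply/Wl_spec.
have := phi_sep (Ordinal (etrans (index_mem u Wl) uWl)).
rewrite /= nth_index // !dotr_trmx.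
by rewrite ltNge Vgamma_ge_cocycle_row.
Qed.

End Cocycle.

Theorem lemma2p3 (n : nat) (rd : seq ('rV[int]_n * 'cV[int]_n))
  (hrd : root_datum rd) (xi : 'cV[int]_n) (hxi : regular rd xi)
  (R : realFieldType) (K : fieldType) (val : K -> R)
  (hval : forall x y : K, x != 0 -> y != 0 -> val (x * y) = val x + val y)
  (gamma : 'M[int]_n -> 'cV[int]_n -> K) (hg : cocycle rd xi val gamma) :
  forall z : 'cV[int]_n -> R,
    Vgamma rd xi val gamma z <->
    in_hull (fun p => exists2 w, inW rd w & p = (fun l => - zw val gamma w l)) z.
Proof.
move=> z; split; first exact: Vgamma_sub_hull.
exact: hull_sub_Vgamma.
Qed.
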